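(* Let $n\ge d\ge 1$ and let $(A,C)$ be a real OTSON pair ($A$ is $n\times n$, $C$ is $d\times n$). Let $\{\tilde Q(\theta):\theta\in\Theta\}$ be an orthogonal reduction parameterization of $O(d+1)$ to $e_1$, and for $\theta\in\Theta$ and $1\le k\le n$ let $Q^{(k)}(\theta)$ be its embedding defined below. Then there exist $\theta_1,\dots,\theta_n\in\Theta$ such that $$\begin{pmatrix} C\\ A\end{pmatrix}=Q^{(n)}(\theta_n)Q^{(n-1)}(\theta_{n-1})\cdots Q^{(2)}(\theta_2)Q^{(1)}(\theta_1)\begin{pmatrix}\mathbb{I}_n\\ 0_{d,n}\end{pmatrix}.$$
   Context: ${}^*$ denotes transpose; $e_k$ is the $k$-th unit vector; $0_{a,b}$ is the $a\times b$ zero matrix. $(A,C)$ is OTSON if $A^*A=\mathbb{I}_n-C^*C$ and the $(n+d)\times n$ stack $Q=\begin{pmatrix} C\\ A\end{pmatrix}$ satisfies $Q_{i,j}=0$ for $j>i$. An orthogonal reduction parameterization (ORP) of $O(m)$ to $e_k$ is a family $\{\tilde Q(\theta):\theta\in\Theta\}$, $\Theta\subset\mathbb{R}^{m-1}$, of real orthogonal $m\times m$ matrices such that for every nonzero $h\in\mathbb{R}^m$ there is a unique $\theta(h)\in\Theta$ with $\tilde Q(\theta)^*h=\|h\|e_k$. For an ORP of $O(d+1)$ to $e_1$ write $\tilde Q(\theta)=\begin{pmatrix}\mu&y^*\\ x&\tilde O\end{pmatrix}$ with $\mu\in\mathbb{R}$, $x,y\in\mathbb{R}^d$, $\tilde O\in\mathbb{R}^{d\times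 d}$ (all depending on $\theta$). The embedding is the $(n+d)\times(n+d)$ matrix $$Q^{(k)}(\theta)=\mathbb{I}_{k-1}\oplus\begin{pmatrix}\mu&0_{1,n-k}&y^*\\ 0_{n-k,1}&\mathbb{I}_{n-k}&0_{n-k,d}\\ x&0_{d,n-k}&\tilde O\end{pmatrix}.$$ *)

From HB Require Import structures.
From mathcomp Require Import all_boot all_order all_algebra.
From mathcomp Require Import all_reals.
Set Implicit Arguments. Unset Strict Implicit. Unset Printing Implicit Defensive.
Import Order.TTheory GRing.Theory Num.Theory.
Local Open Scope ring_scope.

Definition vnorm (R : realType) (m : nat) (h : 'cV[R]_m) : R :=
  Num.sqrt (\sum_(i < m) h i 0 ^+ 2).

(* k-th unit column vector (0-based index k). *)
Definition unitv (R : realType) (m : nat) (k : 'I_m) : 'cV[R]_m :=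
  \col_(i < m) (i == k)%:R.

Definition OTSON (R : realType) (n d : nat) (A : 'M[R]_n) (C : 'M[R]_(d, n)) : Prop :=
  A^T *m A = 1%:M - C^T *m C /\
  (forall (i : 'I_(d + n)) (j : 'I_n), (i < j)%N -> col_mx C A i j = 0).

(* Orthogonal reduction parameterization of O(m) to e_k, here with m = p.+1,
   parameter space Theta ⊂ R^(m-1) = R^p (row vectors), family Qt. *)
Definition is_ORP (R : realType) (p : nat) (k : 'I_p.+1)
  (Theta : 'rV[R]_p -> Prop) (Qt : 'rV[R]_p -> 'M[R]_p.+1) : Prop :=
  (forall th, Theta th -> (Qt th)^T *m Qt th = 1%:M) /\
  (forall h : 'cV[R]_p.+1, h != 0 ->
     exists! th, Theta th /\ (Qt th)^T *m h = vnorm h *: unitv R k).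

(* Position of a (0-based) row/column index i of an (n+d)x(n+d) matrix inside
   the block [[mu, y^*], [x, O~]] of the embedding Q^(k0+1): index k0 maps to
   block index 0, indices n..n+d-1 map to block indices 1..d, others to None
   (identity part). *)
Definition emb_idx (n d : nat) (k0 : 'I_n) (i : 'I_(n + d)) : option 'I_d.+1 :=
  if (i == k0 :> nat) then Some ord0
  else if (n <= i)%N then Some (inord (i - n).+1) else None.

(* The embedding Q^(k0+1)(th) =
   I_{k0} ⊕ [[mu, 0, y^*], [0, I_{n-k0-1}, 0], [x, 0, O~]]  (entrywise). *)
Definition embedQ (R : realType) (n d : nat) (Qt : 'rV[R]_d -> 'M[R]_d.+1)
  (k0 : 'I_n) (th : 'rV[R]_d) : 'M[R]_(n + d) :=
  \matrix_(i < n + d, j < n + d)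
    match @emb_idx n d k0 i, @emb_idx n d k0 j with
    | Some a, Some b => Qt th a b
    | None, None => (i == j)%:R
    | _, _ => 0
    end.

(* Q^(n)(th_n) ... Q^(1)(th_1) (I_n ; 0_{d,n}), where ths k0 = th_{k0+1}. *)
Definition embProd (R : realType) (n d : nat) (Qt : 'rV[R]_d -> 'M[R]_d.+1)
  (ths : 'I_n -> 'rV[R]_d) : 'M[R]_(n + d, n) :=
  foldl (fun M k0 => embedQ Qt k0 (ths k0) *m M)
        (col_mx (1%:M : 'M[R]_n) (0 : 'M[R]_(d, n))) (enum 'I_n).

From HB Require Import structures.
From mathcomp Require Import all_boot all_order all_algebra.
From mathcomp Require Import all_reals zify.
Set Implicit Arguments. Unset Strict Implicit. Unset Printing Implicit Defensive.
Import Order.TTheory GRing.Theory Num.Theory.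
Local Open Scope ring_scope.

(* Reduce X = (C; A) column by column, from the last to the first.  Call M
   partly reduced at m if its columns are orthonormal, it vanishes above the
   diagonal, and its columns j >= m are the unit vectors e_j.  Then column k
   (k = m - 1) vanishes above row k by triangularity and between rows k and n
   by orthogonality to the columns e_j, j > k: it is a unit vector supported
   on row k and the last d rows, which are exactly the rows Q^(k) acts on.
   The ORP gives theta_k such that Q~(theta_k)^T maps its restriction to e_1,
   so Q^(k)(theta_k)^T M is partly reduced at k: column k becomes e_k, while
   the columns e_j (j > k) and the rows above k are left alone.  Writing
   Q^(k)(theta) = I + S^T (Q~(theta) - I) S with S the row selection, S S^T = I
   makes Q^(k)(theta) orthogonal, so M = Q^(k) (Q^(k)^T M); at m = 0 the
   matrix is (I; 0). *)

Lemma eq_in_foldl (T : eqType) (U : Type) (f g : U -> T -> U) (s : seq T) (z : U) :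
  {in s, forall x, f^~ x =1 g^~ x} -> foldl f z s = foldl g z s.
Proof.
elim: s z => //= x s IHs z fg; rewrite fg ?mem_head //.
by apply: IHs => y ys; apply: fg; rewrite in_cons ys orbT.
Qed.

Lemma mem_take_enum_ord (n m : nat) (k : 'I_n) :
  (k \in take m (enum 'I_n)) = (k < m)%N.
Proof.
rewrite -(mem_map val_inj) map_take val_enum_ord take_iota mem_iota /=.
by rewrite leq_min ltn_ord andbT.
Qed.

Lemma take_enum_ordS (n m : nat) (lt_mn : (m < n)%N) :
  take m.+1 (enum 'I_n) = rcons (take m (enum 'I_n)) (Ordinal lt_mn).
Proof.
rewrite (take_nth (Ordinal lt_mn)) ?size_enum_ord //; congr rcons.
by apply: val_inj; rewrite /= nth_enum_ord.
Qed.

Section Dilation.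
Variables (R : comPzRingType) (p q : nat) (S : 'M[R]_(p, q)).

Definition dilate (X : 'M[R]_p) : 'M[R]_q := 1%:M + S^T *m (X - 1%:M) *m S.

Lemma trmx_dilate X : (dilate X)^T = dilate X^T.
Proof. by rewrite /dilate linearD /= trmx1 !trmx_mul trmxK linearB /= trmx1 mulmxA. Qed.

Lemma dilate1 : dilate 1%:M = 1%:M.
Proof. by rewrite /dilate subrr mulmx0 mul0mx addr0. Qed.

Lemma mul_dilate X r (Y : 'M_(q, r)) :
  dilate X *m Y = Y + S^T *m ((X - 1%:M) *m (S *m Y)).
Proof. by rewrite /dilate mulmxDl mul1mx -!mulmxA. Qed.

Hypothesis SSt : S *m S^T = 1%:M.

Lemma dilateM X Y : dilate (X *m Y) = dilate X *m dilate Y.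
Proof.
have XY1 : X *m Y - 1%:M = (X - 1%:M) + (Y - 1%:M) + (X - 1%:M) *m (Y - 1%:M).
  rewrite mulmxBl !mulmxBr !mulmx1 mul1mx.
  by rewrite [RHS]addrACA subrr addr0 addrC addrA subrK.
rewrite /dilate XY1; move: (X - 1%:M) (Y - 1%:M) => X1 Y1.
have SXSY : S^T *m X1 *m S *m (S^T *m Y1 *m S) = S^T *m (X1 *m Y1) *m S.
  by rewrite !mulmxA -(mulmxA _ S) SSt mulmx1.
rewrite mulmxDl mul1mx (mulmxDr (S^T *m X1 *m S)) mulmx1 SXSY.
rewrite !mulmxDr !mulmxDl -!addrA; congr (_ + _).
by rewrite addrCA.
Qed.
End Dilation.

Section EmbeddingIndex.
Variables (n d : nat) (k : 'I_n).

Definition emb_pos (b : 'I_d.+1) : 'I_(n + d) :=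
  if unlift ord0 b is Some c then rshift n c else lshift d k.

Lemma val_emb_pos b : emb_pos b = (if b == ord0 then k : nat else n + b.-1)%N :> nat.
Proof. by rewrite /emb_pos; case: unliftP => [c -> | ->] /=; rewrite ?eqxx ?add0n. Qed.

Lemma emb_idx_pos : pcancel emb_pos (emb_idx k).
Proof.
move=> b; have ltkn := ltn_ord k; have ltbd := ltn_ord b.
rewrite /emb_idx val_emb_pos; have [-> | b0] := eqVneq b ord0; first by rewrite eqxx.
rewrite ifF ?leq_addr; last by apply/eqP; lia.
by congr Some; apply: val_inj; rewrite /= addKn prednK ?inordK // lt0n.
Qed.

Lemma emb_pos_inj : injective emb_pos.
Proof. exact: pcan_inj emb_idx_pos. Qed.

Lemma emb_idx_Some i b : emb_idx k i = Some b -> i = emb_pos b.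
Proof.
have ltid := ltn_ord i; rewrite /emb_idx.
case: ifP => [/eqP ik [<-] | _]; first by apply: ord_inj; rewrite val_emb_pos eqxx.
case: ifP => // ni [<-]; apply: ord_inj; rewrite val_emb_pos -(inj_eq val_inj) /=.
by rewrite inordK /=; lia.
Qed.

Lemma emb_idx_eqNone (i : 'I_(n + d)) : (emb_idx k i == None) = (i < n)%N && (i != k :> nat).
Proof.
rewrite /emb_idx; have [-> | ik] := eqVneq (i : nat) k; first by rewrite andbF.
by rewrite andbT; case: leqP.
Qed.

Lemma emb_pos_eq b (j : nat) : (j < n)%N ->
  (emb_pos b == j :> nat) = (b == ord0) && (j == k).
Proof.
move=> ltjn; rewrite val_emb_pos; have [_ | _] := eqVneq b ord0; first by rewrite eq_sym.
by rewrite andFb; apply/eqP; lia.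
Qed.

End EmbeddingIndex.

Section Selection.
Variables (R : comPzRingType) (n d : nat) (k : 'I_n).

Definition sel_mx : 'M[R]_(d.+1, n + d) := rowsub (emb_pos k) 1%:M.

Lemma sel_mx_mul p (Y : 'M_(n + d, p)) : sel_mx *m Y = rowsub (emb_pos k) Y.
Proof. by rewrite mul_rowsub_mx mul1mx. Qed.

Lemma tr_sel_mx_mulE p (Y : 'M_(d.+1, p)) i j :
  (sel_mx^T *m Y) i j = if emb_idx k i is Some a then Y a j else 0.
Proof.
rewrite mxE; case Ei: (emb_idx k i) => [a|].
  rewrite (bigD1 a) //= !mxE (emb_idx_Some Ei) eqxx mul1r big1 ?addr0 // => b ba.
  by rewrite !mxE (inj_eq (@emb_pos_inj _ _ k)) (negbTE ba) mul0r.
apply: big1 => b _; rewrite !mxE; case: eqP => [ib | _]; last by rewrite mul0r.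
by move: Ei; rewrite -ib emb_idx_pos.
Qed.

Lemma mul_sel_mxE p (Y : 'M_(p, d.+1)) i j :
  (Y *m sel_mx) i j = if emb_idx k j is Some b then Y i b else 0.
Proof.
rewrite -[Y *m _]trmxK trmx_mul mxE tr_sel_mx_mulE.
by case: (emb_idx k j) => [b|]; rewrite ?mxE.
Qed.

Lemma sel_mx_mul_tr : sel_mx *m sel_mx^T = 1%:M.
Proof.
apply/matrixP => a b; rewrite sel_mx_mul !mxE.
by rewrite (inj_eq (@emb_pos_inj _ _ k)) eq_sym.
Qed.

End Selection.

Arguments sel_mx {R n d} k.

Section Embedding.
Variables (R : realType) (n d : nat) (Qt : 'rV[R]_d -> 'M[R]_d.+1) (k : 'I_n).

Lemma embedQE th : embedQ Qt k th = dilate (sel_mx k) (Qt th).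
Proof.
apply/matrixP => i j; rewrite /dilate -mulmxA [RHS]mxE tr_sel_mx_mulE mxE [1%:M i j]mxE.
case Ei: (emb_idx k i) => [a|]; case Ej: (emb_idx k j) => [b|];
  rewrite ?mul_sel_mxE ?Ej ?addr0 //.
2,3: by case: eqP => // ij; move: Ei; rewrite ij Ej.
rewrite (emb_idx_Some Ei) (emb_idx_Some Ej) (inj_eq (@emb_pos_inj _ _ k)).
by rewrite !mxE addrC subrK.
Qed.

Lemma embedQ_mul_tr th : (Qt th)^T *m Qt th = 1%:M ->
  embedQ Qt k th *m (embedQ Qt k th)^T = 1%:M.
Proof.
move=> /mulmx1C QQt; have SSt := sel_mx_mul_tr R d k.
by rewrite embedQE trmx_dilate -dilateM // QQt dilate1.
Qed.

End Embedding.

Lemma vnormE (R : realType) m (h : 'cV[R]_m) : vnorm h = Num.sqrt ((h^T *m h) 0 0).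
Proof. by rewrite /vnorm mxE; congr Num.sqrt; apply: eq_bigr => i _; rewrite mxE expr2. Qed.

Lemma unitv_neq0 (R : realType) m (k : 'I_m) : unitv R k != 0.
Proof. by apply/eqP => /matrixP/(_ k 0); rewrite !mxE eqxx => /eqP; rewrite oner_eq0. Qed.

Lemma is_ORP_inhabited (R : realType) p (k : 'I_p.+1) Theta Qt :
  @is_ORP R p k Theta Qt -> exists th, Theta th.
Proof. by case=> _ /(_ _ (unitv_neq0 R k)) [th [[Tth _] _]]; exists th. Qed.

Section Reduction.
Variables (R : realType) (n d : nat).

Definition partly_reduced (m : nat) (M : 'M[R]_(n + d, n)) : Prop :=
  [/\ M^T *m M = 1%:M,
      forall (i : 'I_(n + d)) (j : 'I_n), (i < j)%N -> M i j = 0 &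
      forall (i : 'I_(n + d)) (j : 'I_n), (m <= j)%N -> M i j = (i == j :> nat)%:R].

Lemma partly_reduced0 M : partly_reduced 0 M -> M = col_mx 1%:M 0.
Proof.
case=> _ _ Me; rewrite -pid_mx_col; apply/matrixP => i j.
by rewrite Me // mxE; case: eqP => //= ->; rewrite ltn_ord.
Qed.

Section Step.
Variables (k : 'I_n) (M : 'M[R]_(n + d, n)).
Hypothesis Mred : partly_reduced k.+1 M.

Lemma partly_reduced_col_support i : emb_idx k i = None -> M i k = 0.
Proof.
move=> /eqP; rewrite emb_idx_eqNone => /andP [lt_in ne_ik].
case: Mred => MtM Mtri Me.
case: (ltngtP i k) => [lt_ik | lt_ki | eq_ik]; first exact: Mtri.
- have := congr1 (fun X : 'M[R]_n => X (Ordinal lt_in) k) MtM.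
  rewrite !mxE -val_eqE /= gtn_eqF // (bigD1 i) //= mxE Me //= eqxx mul1r.
  rewrite big1 ?addr0 // => l li.
  by rewrite mxE Me //= val_eqE (negbTE li) mul0r.
- by rewrite eq_ik eqxx in ne_ik.
Qed.

Lemma tr_sel_mx_sel_col : (sel_mx k)^T *m (sel_mx k *m col k M) = col k M.
Proof.
apply/matrixP => i j; rewrite (ord1 j) tr_sel_mx_mulE.
case Ei: (emb_idx k i) => [a|]; last by rewrite mxE partly_reduced_col_support.
by rewrite sel_mx_mul !mxE (emb_idx_Some Ei).
Qed.

Lemma sel_col_unit : (sel_mx k *m col k M)^T *m (sel_mx k *m col k M) = 1%:M.
Proof.
case: Mred => MtM _ _.
rewrite trmx_mul -mulmxA tr_sel_mx_sel_col tr_col colE mulmxA -row_mul MtM -colE.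
by apply/matrixP => i j; rewrite !ord1 !mxE eqxx.
Qed.

Variables (Qt : 'rV[R]_d -> 'M[R]_d.+1) (th : 'rV[R]_d).
Hypotheses (QtQ : (Qt th)^T *m Qt th = 1%:M)
  (Qt_sel_col : (Qt th)^T *m (sel_mx k *m col k M) = unitv R ord0).

Lemma partly_reduced_next : partly_reduced k ((embedQ Qt k th)^T *m M).
Proof.
case: (Mred) => MtM Mtri Me.
have EEt := embedQ_mul_tr k QtQ; set E := embedQ Qt k th in EEt *.
have E'E i j : (E^T *m M) i j = M i j +
    if emb_idx k i is Some a then (((Qt th)^T - 1%:M) *m (sel_mx k *m M)) a j else 0.
  by rewrite /E embedQE trmx_dilate mul_dilate mxE tr_sel_mx_mulE.
have E'col i (j : 'I_n) : (k <= j)%N -> (E^T *m M) i j = (i == j :> nat)%:R.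
  rewrite leq_eqVlt => /orP [/eqP/ord_inj <- | lt_kj]; rewrite E'E.
    case Ei: (emb_idx k i) => [a|]; last first.
      move/eqP: (Ei); rewrite emb_idx_eqNone => /andP [_ /negbTE ->].
      by rewrite addr0 partly_reduced_col_support.
    have -> : (((Qt th)^T - 1%:M) *m (sel_mx k *m M)) a k
            = (((Qt th)^T - 1%:M) *m (sel_mx k *m col k M)) a 0.
      by rewrite colE !mulmxA -colE [RHS]mxE.
    rewrite mulmxBl mul1mx Qt_sel_col.
    have -> : (unitv R ord0 - sel_mx k *m col k M) a 0 = (a == ord0)%:R - M i k.
      by rewrite sel_mx_mul !mxE (emb_idx_Some Ei).
    by rewrite addrC subrK (emb_idx_Some Ei) emb_pos_eq // eqxx andbT.
  case: (emb_idx k i) => [a|]; last by rewrite addr0 Me.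
  rewrite mxE big1 => [|b _]; first by rewrite addr0 Me.
  by rewrite sel_mx_mul [X in _ * X]mxE Me // emb_pos_eq // gtn_eqF // andbF mulr0.
split => [|i j lt_ij|]; last exact: E'col.
  by rewrite trmx_mul trmxK -mulmxA (mulmxA E) EEt mul1mx.
have [le_kj | lt_jk] := leqP k j; first by rewrite E'col // ltn_eqF.
rewrite E'E; have /eqP -> : emb_idx k i == None.
  by rewrite emb_idx_eqNone; have := ltn_ord k; lia.
by rewrite addr0 Mtri.
Qed.

End Step.
End Reduction.

Lemma castmx_rows_gram (R : comPzRingType) m m' p (eq_m : m = m') (X : 'M[R]_(m, p)) :
  (castmx (eq_m, erefl p) X)^T *m castmx (eq_m, erefl p) X = X^T *m X.
Proof. by case: m' / eq_m; rewrite castmx_id. Qed.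

Lemma OTSON_partly_reduced (R : realType) n d (A : 'M[R]_n) (C : 'M[R]_(d, n)) :
  OTSON A C -> partly_reduced n (castmx (addnC d n, erefl n) (col_mx C A)).
Proof.
case=> AtA Ctri; split => [|i j lt_ij|i j]; last by rewrite leqNgt ltn_ord.
  by rewrite castmx_rows_gram tr_col_mx mul_row_col AtA addrC subrK.
by rewrite castmxE Ctri.
Qed.

Section Factorization.
Variables (R : realType) (n d : nat).
Variables (Theta : 'rV[R]_d -> Prop) (Qt : 'rV[R]_d -> 'M[R]_d.+1).

Definition embProd_upto (ths : 'I_n -> 'rV[R]_d) (m : nat) : 'M[R]_(n + d, n) :=
  foldl (fun M k => embedQ Qt k (ths k) *m M) (col_mx 1%:M 0) (take m (enum 'I_n)).

Lemma embProd_uptoS ths m (lt_mn : (m < n)%N) :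
  embProd_upto ths m.+1
  = embedQ Qt (Ordinal lt_mn) (ths (Ordinal lt_mn)) *m embProd_upto ths m.
Proof. by rewrite /embProd_upto take_enum_ordS foldl_rcons. Qed.

Lemma eq_embProd_upto ths ths' m : (forall k : 'I_n, (k < m)%N -> ths k = ths' k) ->
  embProd_upto ths m = embProd_upto ths' m.
Proof. by move=> eq_ths; apply: eq_in_foldl => k /[!mem_take_enum_ord] /eq_ths ->. Qed.

Lemma embProd_upto_n ths : embProd_upto ths n = embProd Qt ths.
Proof. by rewrite /embProd_upto take_oversize // size_enum_ord. Qed.

Hypothesis ORP : is_ORP ord0 Theta Qt.

Lemma partly_reduced_step (k : 'I_n) M : partly_reduced k.+1 M ->
  exists2 th, Theta th & partly_reduced k ((embedQ Qt k th)^T *m M).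
Proof.
move=> Mred; case: ORP => QtQ ORP_ex.
have h_unit := sel_col_unit Mred; set h := sel_mx k *m col k M in h_unit.
have h_norm : vnorm h = 1 by rewrite vnormE h_unit mxE sqrtr1.
have h_neq0 : h != 0.
  by apply: contra_eq_neq h_norm => ->; rewrite vnormE mulmx0 mxE sqrtr0 eq_sym oner_neq0.
have [th [[Tth Qt_h] _]] := ORP_ex h h_neq0.
exists th => //; apply: partly_reduced_next (QtQ th Tth) _ => //.
by rewrite Qt_h h_norm scale1r.
Qed.

Lemma partly_reduced_factor m M : (m <= n)%N -> partly_reduced m M ->
  exists ths, (forall k, Theta (ths k)) /\ M = embProd_upto ths m.
Proof.
elim: m M => [|m IHm] M le_mn Mred.
  have [th0 Tth0] := is_ORP_inhabited ORP.
  by exists (fun=> th0); split => //; rewrite (partly_reduced0 Mred) /embProd_upto take0.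
set k := Ordinal le_mn.
have [th Tth M'red] := partly_reduced_step (k := k) Mred.
have [ths [Tths M'E]] := IHm _ (ltnW le_mn) M'red.
exists (fun i => if i == k then th else ths i); split => [i|]; first by case: eqP.
rewrite embProd_uptoS -/k eqxx (eq_embProd_upto (ths' := ths)) => [|i lt_im].
  by rewrite -M'E mulmxA (embedQ_mul_tr _ (proj1 ORP th Tth)) mul1mx.
by rewrite ifN // -val_eqE /= ltn_eqF.
Qed.

End Factorization.

Theorem theorem6p1 (R : realType) (n d : nat) (Hd1 : (1 <= d)%N) (Hdn : (d <= n)%N)
  (A : 'M[R]_n) (C : 'M[R]_(d, n)) (Theta : 'rV[R]_d -> Prop)
  (Qt : 'rV[R]_d -> 'M[R]_d.+1) :
  OTSON A C -> is_ORP ord0 Theta Qt ->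
  exists ths : 'I_n -> 'rV[R]_d,
    (forall k, Theta (ths k)) /\
    castmx (addnC d n, erefl n) (col_mx C A) = embProd Qt ths.
Proof.
move=> ACotson ORP.
have [ths [Tths ->]] := partly_reduced_factor ORP (leqnn n) (OTSON_partly_reduced ACotson).
by exists ths; rewrite embProd_upto_n.
Qed.
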